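(* For all integers $3\le s<t$ there is a positive constant $C$ depending only on $s$ such that for every integer $n\ge 2$, $$ f_{s-1,t-1}^{(2)}\big(\lfloor \sqrt{\log n}\rfloor\big) \le f_{s,t}^{(3)}(n) \le C\log n . $$
   Context: For integers $k\le s<t$ and $n\ge 0$, $f_{s,t}^{(k)}(n)$ is defined as $$ f_{s,t}^{(k)}(n)=\min_{\mathcal{G}} \max\{ |W| : W\subseteq V(\mathcal{G}) \text{ and the induced subhypergraph } \mathcal{G}[W] \text{ contains no copy of } K_s^{(k)}\}, $$ where the minimum is over all $k$-uniform hypergraphs $\mathcal{G}$ on $n$ vertices containing no copy of $K_t^{(k)}$, and $K_r^{(k)}$ denotes the complete $k$-uniform hypergraph on $r$ vertices (so for $k=2$, $K_r^{(2)}=K_r$ and $f^{(2)}_{s,t}$ concerns graphs). All logarithms are natural logarithms. *)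

From HB Require Import structures.
From mathcomp Require Import all_boot all_order all_algebra.
Set Implicit Arguments. Unset Strict Implicit. Unset Printing Implicit Defensive.

Definition uniform (n k : nat) (E : {set {set 'I_n}}) : bool :=
  [forall e in E, #|e| == k].

Definition is_clique (n k : nat) (E : {set {set 'I_n}}) (X : {set 'I_n}) : bool :=
  [forall e : {set 'I_n}, ((e \subset X) && (#|e| == k)) ==> (e \in E)].

Definition has_K (n k r : nat) (E : {set {set 'I_n}}) (W : {set 'I_n}) : bool :=
  [exists X : {set 'I_n}, [&& X \subset W, #|X| == r & is_clique k E X]].

Definition indep_num (n k s : nat) (E : {set {set 'I_n}}) : nat :=
  \max_(W : {set 'I_n} | ~~ has_K k s E W) #|W|.

(* f^{(k)}_{s,t}(n): minimum over K_t^{(k)}-free k-uniform hypergraphs on n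
   vertices.  (The default value n of the min is never relevant: indep_num is
   always <= n, and the family is nonempty when t > k.) *)
Definition f (k s t n : nat) : nat :=
  \big[minn/n]_(E : {set {set 'I_n}} | uniform k E && ~~ has_K k t E setT)
     indep_num k s E.

From HB Require Import structures.
From mathcomp Require Import all_boot all_order all_algebra.
From mathcomp Require Import zify.
Set Implicit Arguments. Unset Strict Implicit. Unset Printing Implicit Defensive.

(* Colour the pairs a < b of vertices with s - 1 colours and
   let a < b < c be an edge iff ab and ac get different colours.  There is no
   K_t, t > s: the t - 1 pairs at the least vertex of a clique would need
   distinct colours.  A set of s^2 K vertices contains K^2 "lines" of s
   vertices, any two sharing at most one vertex, so their pair sets are
   disjoint; each line spans a K_s under one prescribed colouring of its
   pairs.  Counting the colourings that miss all K^2 prescriptions and taking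
   a union bound over the vertex sets shows that for K ~ s^2 (s-1)^(s^2) ln n
   some colouring leaves no K_s-free set of size s^2 K.

   In a 3-graph on n >= 2^C(m+1,2) vertices the Erdos-Rado
   argument finds v_0, ..., v_m such that whether {v_i, v_i', v_k},
   i < i' < k, is an edge depends only on (i, i').  Taking these labels as the
   edges of a graph on [0, m), a K_{t-1} of the graph together with v_m gives
   a K_t, and a K_{s-1}-free set Z gives the K_s-free set Z + v_m.  Finally
   m = floor (sqrt (ln n)) satisfies 2^C(m+1,2) <= 2^(m^2) <= n. *)

(** * Counting functions that avoid prescribed patterns *)

Section CountFunctions.
Variables (T V : finType).
Local Notation fT := {ffun T -> V}.
Implicit Types (D : {set T}) (g h : fT) (P : pred fT).

Definition agree_on D g (f : fT) := [forall x in D, f x == g x].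

Definition ignores D P :=
  forall f f' : fT, (forall x, x \notin D -> f x = f' x) -> P f = P f'.

Lemma card_ffun_fixed_off D h :
  #|[pred f : fT | [forall x in ~: D, f x == h x]]| = #|V| ^ #|D|.
Proof.
pose F x := if x \in D then (predT : pred V) else pred1 (h x).
have -> : #|[pred f : fT | [forall x in ~: D, f x == h x]]| =
          #|(family F : simpl_pred fT)|.
  apply: eq_card => f; rewrite !inE; apply/forall_inP/familyP => Hf x; rewrite /F.
    by case: ifP => xD //; rewrite inE; apply: Hf; rewrite inE xD.
  by rewrite inE => /negbTE xD; have := Hf x; rewrite /F xD inE.
rewrite card_family foldrE big_map big_enum /=.
rewrite (eq_bigr (fun x => if x \in D then #|V| else 1)) => [|x _]; last first.
  by rewrite /F; case: ifP => _; [apply: eq_card | apply: card1].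
by rewrite -big_mkcond /= prod_nat_const.
Qed.

Lemma card_agree_on D g P : ignores D P ->
  #|[pred f : fT | P f && agree_on D g f]| * #|V| ^ #|D| = #|P|.
Proof.
move=> PD; pose r (f : fT) := [ffun x => if x \in D then g x else f x].
have r_off (f : fT) x : x \notin D -> r f x = f x.
  by rewrite /r ffunE => /negbTE ->.
rewrite -[in RHS]sum1_card (partition_big r [pred h | P h && agree_on D g h]); last first.
  move=> f Pf; rewrite inE /= (PD _ f) => [|x /r_off //].
  by rewrite [P f]Pf; apply/forall_inP => x xD; rewrite /r ffunE xD.
rewrite -sum_nat_const /=; symmetry.
apply: eq_big => [h|h /andP[Ph /forall_inP Ah]]; first by rewrite inE.
rewrite sum1_card -(card_ffun_fixed_off D h); apply: eq_card => f; rewrite !inE.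
apply/andP/forall_inP => [[_ /eqP <-] x | Hf].
  by rewrite inE => /r_off ->.
have rfh : r f = h.
  apply/ffunP => x; rewrite /r ffunE; case: ifP => xD; first by rewrite (eqP (Ah x xD)).
  by apply/eqP/Hf; rewrite inE xD.
by rewrite rfh unfold_in (PD _ h) // => x xD; apply/eqP/Hf; rewrite inE.
Qed.

Lemma card_disagree_on D g P d : ignores D P -> 0 < #|V| -> #|D| <= d ->
  #|[pred f : fT | P f && ~~ agree_on D g f]| * #|V| ^ d <= #|P| * (#|V| ^ d).-1.
Proof.
move=> PD V0 Dd; have Ha := card_agree_on g PD.
have Hsplit : #|[pred f : fT | P f && agree_on D g f]| +
              #|[pred f : fT | P f && ~~ agree_on D g f]| = #|P|.
  rewrite -(cardID [pred f : fT | agree_on D g f] P); congr (_ + _);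
  by apply: eq_card => f; rewrite !inE andbC.
have -> : #|V| ^ d = #|V| ^ #|D| * #|V| ^ (d - #|D|) by rewrite -expnD subnKC.
have x0 : 0 < #|V| ^ #|D| by rewrite expn_gt0 V0.
have y0 : 0 < #|V| ^ (d - #|D|) by rewrite expn_gt0 V0.
move: Ha Hsplit x0 y0; set a := #|_|; set c := #|_|; set p := #|P|.
set x := #|V| ^ #|D|; set y := #|V| ^ (d - #|D|); nia.
Qed.

Lemma card_disagree_all (I : eqType) (r : seq I) (D : I -> {set T})
    (g : I -> fT) d :
  0 < #|V| -> uniq r -> {in r &, forall i j, i != j -> [disjoint D i & D j]} ->
  (forall i, #|D i| <= d) ->
  #|[pred f : fT | all (fun i => ~~ agree_on (D i) (g i) f) r]| * (#|V| ^ d) ^ size r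
    <= (#|V| ^ d).-1 ^ size r * #|V| ^ #|T|.
Proof.
move=> V0 + + Dd; elim: r => [|i r IH] /= => [_ _|/andP[ir ur] Ddisj].
  by rewrite !expn0 !muln1 mul1n -card_ffun max_card.
set q := #|V| ^ d; set P := [pred f : fT | all (fun j => ~~ agree_on (D j) (g j) f) r].
have PDi : ignores (D i) P.
  move=> f f' ff'; rewrite !inE; apply: eq_in_all => j jr; congr (~~ _).
  apply: eq_forallb_in => x xDj.
  have dji : [disjoint D j & D i].
    by apply: Ddisj; rewrite ?inE ?jr ?eqxx ?orbT //; apply: contraNneq ir => <-.
  by rewrite ff' // (disjointFr dji xDj).
have {}IH : #|P| * q ^ size r <= q.-1 ^ size r * #|V| ^ #|T|.
  by apply: IH ur _ => a b ar br; apply: Ddisj; rewrite inE ?ar ?br orbT.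
have Hi := card_disagree_on (g i) PDi V0 (Dd i).
rewrite (eq_card (B := [pred f | P f && ~~ agree_on (D i) (g i) f])) => [|f]; last first.
  by rewrite !inE andbC.
rewrite !expnS mulnA; apply: leq_trans (leq_mul Hi (leqnn _)) _.
rewrite mulnAC -/q; apply: leq_trans (leq_mul IH (leqnn q.-1)) _.
by rewrite mulnC mulnA.
Qed.
End CountFunctions.

Section OrdinalSets.
Variable N : nat.
Implicit Types (a b c : 'I_N) (e : {set 'I_N}) (q : seq 'I_N).
Local Notation lt_val := (relpre (@nat_of_ord N) ltn).

Lemma sorted_enum_set e : sorted lt_val (enum e).
Proof.
rewrite /enum_mem -enumT; apply: sorted_filter; first exact: ltn_trans.
by rewrite -(@sorted_map _ _ (@nat_of_ord N) ltn) val_enum_ord iota_ltn_sorted.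
Qed.

Lemma enum_set_sorted q : sorted lt_val q -> enum [set x in q] = q.
Proof.
move=> sq; apply: (irr_sorted_eq (leT := lt_val)) (sorted_enum_set _) sq _.
- by move=> b a c; apply: ltn_trans.
- by move=> a; rewrite /= ltnn.
- by move=> a; rewrite mem_enum inE.
Qed.

Lemma enum_set2 a b : a < b -> enum [set a; b] = [:: a; b].
Proof.
move=> ab; rewrite -[RHS]enum_set_sorted /= ?ab //.
by apply: eq_enum => x; rewrite !inE.
Qed.

Lemma enum_set3 a b c : a < b -> b < c -> enum [set a; b; c] = [:: a; b; c].
Proof.
move=> ab bc; rewrite -[RHS]enum_set_sorted /= ?ab ?bc //.
by apply: eq_enum => x; rewrite !inE orbA.
Qed.

Lemma set_enum_sorted e :
  exists2 q, sorted lt_val q & size q = #|e| /\ e = [set x in q].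
Proof.
exists (enum e); first exact: sorted_enum_set.
by split; [rewrite cardE | apply/setP => x; rewrite inE mem_enum].
Qed.

Lemma set2_sorted e : #|e| = 2 -> exists a b, a < b /\ e = [set a; b].
Proof.
move=> e2; case: (set_enum_sorted e) => q; rewrite e2.
case: q => [|a [|b [|? ?]]] /= + [] // _ -> => /andP[ab _].
by exists a, b; split=> //; apply/setP => x; rewrite !inE.
Qed.

Lemma set3_sorted e : #|e| = 3 -> exists a b c, [/\ a < b, b < c & e = [set a; b; c]].
Proof.
move=> e3; case: (set_enum_sorted e) => q; rewrite e3.
case: q => [|a [|b [|c [|? ?]]]] /= + [] // _ -> => /and3P[ab bc _].
by exists a, b, c; split=> //; apply/setP => x; rewrite !inE orbA.
Qed.

End OrdinalSets.

Lemma card_set3 (T : finType) (a b c : T) :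
  a != b -> a != c -> b != c -> #|[set a; b; c]| = 3.
Proof. by move=> ab ac bc; rewrite -setUA cardsU1 cards2 bc !inE negb_or ab ac. Qed.

Lemma subset_of_card (T : finType) (A : {set T}) k : k <= #|A| ->
  exists2 B : {set T}, B \subset A & #|B| = k.
Proof.
elim: k => [|k IH] kA; first by exists set0; rewrite ?sub0set ?cards0.
have [B BA Bk] := IH (ltnW kA).
have /subsetPn[x xA xB] : ~~ (A \subset B).
  by apply/negP => /subset_leq_card; rewrite Bk leqNgt kA.
by exists (x |: B); rewrite ?subUset ?sub1set ?xA ?BA // cardsU1 xB Bk.
Qed.

Lemma subset_imset_inj (aT rT : finType) (h : aT -> rT) (A : {set aT}) (X : {set rT}) :
  injective h -> X \subset h @: A ->
  exists X' : {set aT}, [/\ X' \subset A, X = h @: X' & #|X'| = #|X|].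
Proof.
move=> h_inj XA; set X' := [set x in A | h x \in X].
have EX : X = h @: X'.
  apply/setP => y; apply/idP/imsetP => [yX | [x]]; last by rewrite inE => /andP[_ +] ->.
  by have /imsetP[x xA yE] := subsetP XA y yX; exists x; rewrite // inE xA -yE yX.
exists X'; split=> //; first by apply/subsetP => x; rewrite inE => /andP[].
by rewrite EX card_imset.
Qed.

Lemma imset_set3_sorted (T : finType) N (h : 'I_N -> T) (A : {set 'I_N}) (e : {set T}) :
  injective h -> e \subset h @: A -> #|e| = 3 ->
  exists i j k : 'I_N, [/\ i < j, j < k, [&& i \in A, j \in A & k \in A]
                   & e = [set h i; h j; h k]].
Proof.
move=> h_inj eA e3; have [e' [e'A eE e'3]] := subset_imset_inj h_inj eA.
have [i [j [k [ij jk e'E]]]] := set3_sorted (etrans e'3 e3).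
exists i, j, k; split=> //; last by rewrite eE e'E !imsetU !imset_set1.
by rewrite !(subsetP e'A) // e'E !inE eqxx ?orbT.
Qed.

Lemma exists_injection (T U : finType) (W : {set U}) : #|T| <= #|W| ->
  exists2 u : T -> U, injective u & forall x, u x \in W.
Proof.
move=> TW; exists (fun x => enum_val (widen_ord TW (enum_rank x))) => [x y|x].
  by move/enum_val_inj/(congr1 val) => /= /ord_inj/enum_rank_inj.
exact: enum_valP.
Qed.

Lemma card_bigcup_le (I T : finType) (P : pred I) (F : I -> {set T}) :
  #|\bigcup_(i | P i) F i| <= \sum_(i | P i) #|F i|.
Proof.
apply: (big_rec2 (fun (A : {set T}) m => #|A| <= m)); first by rewrite cards0.
by move=> i A m _ Am; apply: leq_trans (leq_card_setU _ _) _; rewrite leq_add2l.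
Qed.

Lemma union_bound (I T : finType) (P : pred I) (bad : I -> {set T}) q b :
  (forall i, P i -> #|bad i| * q <= b) -> #|P| * b < #|T| * q ->
  exists x, forall i, P i -> x \notin bad i.
Proof.
move=> bad_le lt_b.
case: (pickP [pred x | [forall (i | P i), x \notin bad i]]) => [x /forall_inP|cover].
  by exists x.
have : #|T| <= \sum_(i | P i) #|bad i|.
  rewrite -cardsT; apply: leq_trans (card_bigcup_le _ _); apply: subset_leq_card.
  apply/subsetP => x _; have /forall_inPn[i Pi /negPn xi] := negbT (cover x).
  by apply/bigcupP; exists i.
move=> /leq_mul/(_ (leqnn q)); rewrite big_distrl /= => le_T.
have le_sum : \sum_(i | P i) #|bad i| * q <= \sum_(i | P i) b.
  exact: leq_sum _ bad_le.
by have := leq_trans le_T le_sum; rewrite sum_nat_const leqNgt lt_b.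
Qed.

Lemma pigeonhole_fiber (T U : finType) (A : {set T}) (h : T -> U) (y0 : U) :
  exists y, #|A| <= #|[set x in A | h x == y]| * #|U|.
Proof.
pose F y := #|[set x in A | h x == y]|.
have [y _ Fmax] := @arg_maxnP _ y0 predT F isT.
exists y; rewrite -sum1_card (partition_big h predT) //= mulnC -sum_nat_const.
apply: leq_sum => z _; apply: leq_trans (Fmax z isT); rewrite sum1_card.
by apply: subset_leq_card; apply/subsetP => x; rewrite !inE.
Qed.

Lemma has_K_mono n k r (E : {set {set 'I_n}}) (W W' : {set 'I_n}) :
  W \subset W' -> has_K k r E W -> has_K k r E W'.
Proof.
move=> WW' /existsP[X /and3P[XW Xr XE]].
by apply/existsP; exists X; rewrite Xr XE (subset_trans XW WW').
Qed.

(** * The upper bound *)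

Section ColoringHypergraph.
Variables (n r : nat) (chi : {ffun 'I_n * 'I_n -> 'I_r.+1}).

(* [enum e] lists [e] increasingly (sorted_enum_set), so here a < b < c. *)
Definition coloring_hypergraph : {set {set 'I_n}} :=
  [set e : {set 'I_n} |
    if enum e is [:: a; b; c] then chi (a, b) != chi (a, c) else false].

Lemma uniform_coloring_hypergraph : uniform 3 coloring_hypergraph.
Proof.
by apply/forall_inP => e; rewrite inE cardE; case: (enum e) => [|? [|? [|? []]]].
Qed.

Lemma mem_coloring_hypergraph (a b c : 'I_n) : a < b -> b < c ->
  ([set a; b; c] \in coloring_hypergraph) = (chi (a, b) != chi (a, c)).
Proof. by move=> ab bc; rewrite inE enum_set3. Qed.

Lemma coloring_hypergraph_Kfree t : r.+2 < t -> ~~ has_K 3 t coloring_hypergraph setT.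
Proof.
move=> rt; apply/negP => /existsP[X /and3P[_ /eqP Xt Xclique]].
have [x0 x0X] : exists x0, x0 \in X.
  by apply/card_gt0P; rewrite Xt; apply: leq_ltn_trans rt.
have [a aX amin] := arg_minnP (@nat_of_ord n) x0X.
have chi_inj : {in X :\ a &, injective (fun y => chi (a, y))}.
  suff chi_neq y z : y \in X :\ a -> z \in X :\ a -> y < z -> chi (a, y) != chi (a, z).
    move=> y z yX zX /eqP; case: (ltngtP y z) => [yz|zy|/val_inj //].
    - by rewrite (negbTE (chi_neq _ _ yX zX yz)).
    - by rewrite eq_sym (negbTE (chi_neq _ _ zX yX zy)).
  rewrite !inE => /andP[ya yX] /andP[_ zX] yz.
  have ay : a < y by rewrite ltn_neqAle eq_sym ya amin.
  rewrite -mem_coloring_hypergraph //; move/forall_inP: Xclique; apply.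
  rewrite card_set3 ?eqxx ?andbT; last 3 first.
  - by rewrite neq_ltn ay.
  - by rewrite neq_ltn (ltn_trans ay yz).
  - by rewrite neq_ltn yz.
  by apply/subsetP => w; rewrite !inE => /orP[/orP[]|] /eqP->.
have Xa : #|X :\ a| = t.-1 by rewrite -Xt (cardsD1 a X) [a \in X]aX.
have := max_card ((fun y => chi (a, y)) @: (X :\ a)).
rewrite card_in_imset // card_ord Xa; lia.
Qed.

End ColoringHypergraph.

Lemma unbump_inord_neq r (i j k : 'I_r.+2) : j != i -> k != i -> j != k ->
  (inord (unbump i j) : 'I_r.+1) != inord (unbump i k).
Proof.
move=> ji ki jk; have := ltn_ord i; have := ltn_ord j; have := ltn_ord k.
move: ji ki jk; rewrite -!val_eqE /= /unbump => ji ki jk kr jr ir.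
by rewrite !inordK; case: (ltnP i j); case: (ltnP i k); lia.
Qed.

Lemma affine_eq2 (a b a' b' i j : nat) : i < j ->
  a * i + b = a' * i + b' -> a * j + b = a' * j + b' -> a = a'.
Proof.
move=> ij Ei Ej; have : a * (j - i) = a' * (j - i) by rewrite !mulnBr; lia.
by move/eqP; rewrite eqn_pmul2r ?subn_gt0 // => /eqP.
Qed.

Section LineConfiguration.
Variables (n r K : nat).
Local Notation s := r.+2.
Variable u : 'I_s * 'I_(K * s) -> 'I_n.
Hypothesis u_inj : injective u.
Implicit Types (l : 'I_K * 'I_K) (i j : 'I_s).

(* The K^2 lines i |-> (i, a i + b) of the grid 'I_s * 'I_(K s), transported
   into W by u.  Two distinct lines meet in at most one column (line_pt_eq2),
   so their pair sets are disjoint. *)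
Lemma line_row_lt l i : l.1 * i + l.2 < K * s.
Proof. by have := ltn_ord l.1; have := ltn_ord l.2; have := ltn_ord i; nia. Qed.

Definition line_pt l i : 'I_n := u (i, Ordinal (line_row_lt l i)).

Lemma line_pt_col l l' i j : line_pt l i = line_pt l' j -> i = j.
Proof. by move/u_inj => []. Qed.

Lemma line_pt_inj l : injective (line_pt l).
Proof. by move=> i j /line_pt_col. Qed.

Lemma line_pt_eq2 l l' i j : i != j ->
  line_pt l i = line_pt l' i -> line_pt l j = line_pt l' j -> l = l'.
Proof.
case: l l' => a b [a' b'] /= ij /u_inj[Ei] /u_inj[Ej].
have ea : a = a' :> nat.
  case: (ltngtP i j) => [lt_ij|lt_ji|eq_ij]; first exact: affine_eq2 lt_ij Ei Ej.
    exact: affine_eq2 lt_ji Ej Ei.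
  by move: ij; rewrite (val_inj eq_ij) eqxx.
by move: Ei; rewrite ea => /addnI/val_inj->; rewrite (val_inj ea).
Qed.

Definition line_pairs l : {set 'I_n * 'I_n} :=
  [set (line_pt l ij.1, line_pt l ij.2) | ij : 'I_s * 'I_s & ij.1 != ij.2].

Lemma card_line_pairs l : #|line_pairs l| <= s * s.
Proof.
apply: leq_trans (leq_imset_card _ _) _; apply: leq_trans (max_card _) _.
by rewrite card_prod card_ord.
Qed.

Lemma disjoint_line_pairs l l' : l != l' -> [disjoint line_pairs l & line_pairs l'].
Proof.
move=> ll'; rewrite -setI_eq0; apply/eqP/setP => xy; rewrite !inE.
apply/negP => /andP[/imsetP[[i j] /= + ->] /imsetP[[i' j'] _ /= [Ei Ej]]].
rewrite inE /= => ij.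
move: (Ei) (Ej) => /line_pt_col ii' /line_pt_col jj'; rewrite -{}ii' -{}jj' in Ei Ej.
by move: ll'; rewrite (line_pt_eq2 ij Ei Ej) eqxx.
Qed.

Definition line_index l (x : 'I_n) : 'I_s :=
  if [pick i | line_pt l i == x] is Some i then i else ord0.

Lemma line_indexK l : cancel (line_pt l) (line_index l).
Proof.
move=> i; rewrite /line_index; case: pickP => [j /eqP /line_pt_inj //|].
by move/(_ i); rewrite eqxx.
Qed.

(* The pair (x_i, x_j) gets colour j - (i < j), which is injective in j for
   fixed i; so every triple of the line is an edge (line_clique). *)
Definition line_coloring l : {ffun 'I_n * 'I_n -> 'I_r.+1} :=
  [ffun xy => inord (unbump (line_index l xy.1) (line_index l xy.2))].

Variables (chi : {ffun 'I_n * 'I_n -> 'I_r.+1}) (W : {set 'I_n}).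
Hypothesis uW : forall p, u p \in W.

Lemma line_clique l : agree_on (line_pairs l) (line_coloring l) chi ->
  has_K 3 s (coloring_hypergraph chi) W.
Proof.
move=> /forall_inP agree_l.
have chi_pt i j : i != j -> chi (line_pt l i, line_pt l j) = inord (unbump i j).
  move=> ij; rewrite (eqP (agree_l _ _)); first by rewrite ffunE /= !line_indexK.
  by apply/imsetP; exists (i, j); rewrite ?inE.
apply/existsP; exists (line_pt l @: setT).
rewrite card_imset; last exact: line_pt_inj.
rewrite cardsT card_ord eqxx /=; apply/andP; split.
  by apply/subsetP => x /imsetP[i _ ->]; apply: uW.
apply/forallP => e; apply/implyP => /andP[eX /eqP/set3_sorted[a [b [c [ab bc Ee]]]]].
have pt_of x : x \in e -> exists i, x = line_pt l i.
  by move=> /(subsetP eX) /imsetP[i _ ->]; exists i.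
have [[i Ea] [j Eb] [k Ec]] : [/\ exists i, a = line_pt l i, exists j, b = line_pt l j
                                 & exists k, c = line_pt l k].
  by split; apply: pt_of; rewrite Ee !inE eqxx ?orbT.
have neq x y : x < y -> x != y by move=> xy; rewrite neq_ltn xy.
have ij : i != j by apply: contra_neq (neq _ _ ab); rewrite Ea Eb => ->.
have ik : i != k by apply: contra_neq (neq _ _ (ltn_trans ab bc)); rewrite Ea Ec => ->.
have jk : j != k by apply: contra_neq (neq _ _ bc); rewrite Eb Ec => ->.
rewrite Ee mem_coloring_hypergraph // Ea Eb Ec !chi_pt //.
by apply: unbump_inord_neq; rewrite // eq_sym.
Qed.

End LineConfiguration.

Lemma f_le_indep_num k s t n (E : {set {set 'I_n}}) :
  uniform k E -> ~~ has_K k t E setT -> f k s t n <= indep_num k s E.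
Proof.
move=> uE Efree; rewrite /f -minEnat -leEnat.
by apply: Order.TotalTheory.bigmin_le_cond; rewrite uE.
Qed.

Lemma indep_num_le k s n (E : {set {set 'I_n}}) m :
  (forall W : {set 'I_n}, #|W| = m -> has_K k s E W) -> indep_num k s E <= m.
Proof.
move=> large_K; apply/bigmax_leqP => W WKfree; rewrite leqNgt; apply/negP => /ltnW mW.
have [W' W'W W'm] := subset_of_card mW.
by move/negP: WKfree; apply; apply: has_K_mono W'W (large_K _ W'm).
Qed.

Section UpperBound.
Variables (n r K : nat).
Local Notation s := r.+2.
Local Notation M := (s * s * K).
Local Notation Q := (r.+1 ^ (s * s)).
Local Notation coloring := {ffun 'I_n * 'I_n -> 'I_r.+1}.

Lemma card_colorings_Kfree_on (W : {set 'I_n}) : M <= #|W| ->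
  #|[set chi : coloring | ~~ has_K 3 s (coloring_hypergraph chi) W]| * Q ^ (K * K)
    <= Q.-1 ^ (K * K) * r.+1 ^ (n * n).
Proof.
move=> MW; have [u u_inj uW] : exists2 u : 'I_s * 'I_(K * s) -> 'I_n,
    injective u & forall p, u p \in W.
  by apply: exists_injection; rewrite card_prod !card_ord mulnA mulnAC.
pose lines := enum [set: 'I_K * 'I_K].
pose avoid := [pred chi : coloring |
  all (fun l => ~~ agree_on (line_pairs u l) (line_coloring u l) chi) lines].
have Kfree_avoid :
    [set chi : coloring | ~~ has_K 3 s (coloring_hypergraph chi) W] \subset avoid.
  apply/subsetP => chi; rewrite !inE => chiW; apply/allP => l _.
  by apply: contra chiW; apply: line_clique.
apply: leq_trans (leq_mul (subset_leq_card Kfree_avoid) (leqnn _)) _.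
have := @card_disagree_all _ _ _ lines (line_pairs u) (line_coloring u) (s * s).
rewrite card_ord /= -cardE cardsT !card_prod !card_ord; apply=> //; first exact: enum_uniq.
  by move=> l l' _ _; apply: disjoint_line_pairs.
exact: card_line_pairs.
Qed.

Lemma exists_coloring_all_large_K : 'C(n, M) * Q.-1 ^ (K * K) < Q ^ (K * K) ->
  exists chi : coloring,
    forall W : {set 'I_n}, #|W| = M -> has_K 3 s (coloring_hypergraph chi) W.
Proof.
move=> lt_CQ; pose bad W := [set chi : coloring | ~~ has_K 3 s (coloring_hypergraph chi) W].
have lt_bound : #|[pred W : {set 'I_n} | #|W| == M]| * (Q.-1 ^ (K * K) * r.+1 ^ (n * n))
                  < #|{: coloring}| * Q ^ (K * K).
  have -> : #|[pred W : {set 'I_n} | #|W| == M]| = 'C(n, M).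
    by rewrite -[n in 'C(n, _)]card_ord -card_draws; apply: eq_card => W; rewrite !inE.
  rewrite card_ffun card_prod !card_ord mulnA mulnC ltn_pmul2l //.
  by rewrite expn_gt0.
have [chi chi_good] := union_bound (bad := bad)
  (fun W WM => card_colorings_Kfree_on (eq_leq (esym (eqP WM)))) lt_bound.
by exists chi => W /eqP /chi_good; rewrite inE negbK.
Qed.

End UpperBound.

Lemma f3_le_of_union_bound s t n K : 1 < s -> s < t ->
  'C(n, s * s * K) * (s.-1 ^ (s * s)).-1 ^ (K * K) < (s.-1 ^ (s * s)) ^ (K * K) ->
  f 3 s t n <= s * s * K.
Proof.
case: s => [|[|r]] // _ rt /exists_coloring_all_large_K[chi chi_good].
apply: leq_trans (f_le_indep_num _ (uniform_coloring_hypergraph chi) _) _.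
  exact: coloring_hypergraph_Kfree.
exact: indep_num_le.
Qed.

(** * The lower bound *)

Section EndHomogeneous.
Variables (n : nat) (H : {set {set 'I_n}}).

Definition triple_edge (x y z : 'I_n) := [set x; y; z] \in H.

(* v_0, ..., v_(j-1) are distinct, and for i < i' whether {v_i, v_i', w} is an
   edge is c i i' for every later w: a later v_k or a candidate in S.  The last
   clause is the Erdos-Rado count: each step keeps a 2^-j fraction of S. *)
Definition end_homogeneous j (v : nat -> 'I_n) (S : {set 'I_n}) (c : nat -> nat -> bool) :=
  [/\ forall i k, i < k -> k < j -> v i != v k,
      forall k, k < j -> v k \notin S,
      forall i i' k, i < i' -> i' < k -> k < j ->
        triple_edge (v i) (v i') (v k) = c i i',
      forall x, x \in S -> forall i i', i < i' -> i' < j ->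
        triple_edge (v i) (v i') x = c i i'
    & n.+1 <= #|S|.+1 * 2 ^ 'C(j.+1, 2)].

Lemma end_homogeneous0 (x0 : 'I_n) :
  end_homogeneous 0 (fun _ => x0) setT (fun _ _ => false).
Proof.
split=> //; rewrite bin_small // muln1 ltnS -[leqLHS]card_ord -cardsT; exact: leqnn.
Qed.

Lemma end_homogeneousS j v S c : end_homogeneous j v S c -> 0 < #|S| ->
  exists v' S' c', end_homogeneous j.+1 v' S' c'.
Proof.
case=> v_inj vS vc Sc sizeS /card_gt0P[x0 x0S].
(* v_j := x0; the new candidates are those x with the most common pattern
   o |-> [{v_o, x0, x} in H], which then defines the labels c o j. *)
pose sig x := [ffun o : 'I_j => triple_edge (v o) x0 x].
have [s0 fiber_size] := pigeonhole_fiber (S :\ x0) sig [ffun=> false].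
rewrite card_ffun card_bool card_ord in fiber_size.
set S' := [set x in S :\ x0 | sig x == s0] in fiber_size.
exists (fun k => if k == j then x0 else v k), S',
  (fun i i' => if i' == j then (if insub i is Some o then s0 o else false) else c i i').
have neq_j i : i < j -> (i == j) = false by move=> ij; rewrite ltn_eqF.
split.
- move=> i k ik; rewrite ltnS leq_eqVlt => /predU1P[kE|kj].
    rewrite kE in ik *; rewrite eqxx neq_j //.
    by apply: contraNneq _ (vS i ik) => ->.
  by rewrite !neq_j ?(ltn_trans ik) // v_inj.
- move=> k; rewrite ltnS !inE !negb_and leq_eqVlt => /predU1P[->|kj].
    by rewrite !eqxx.
  by rewrite neq_j // (negbTE (vS k kj)) orbT.
- move=> i i' k ii' i'k; rewrite ltnS leq_eqVlt => /predU1P[kE|kj].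
    by rewrite kE eqxx !neq_j ?(ltn_trans ii') -?kE // Sc -?kE.
  by rewrite !neq_j ?(ltn_trans ii') ?(ltn_trans i'k) // vc.
- move=> x; rewrite !inE => /andP[/andP[_ xS] /eqP sig_x] i i' ii'.
  rewrite ltnS leq_eqVlt => /predU1P[i'E|i'j]; last first.
    by rewrite !neq_j ?(ltn_trans ii') // Sc.
  have ij : i < j by rewrite -i'E.
  by rewrite i'E eqxx neq_j // insubT -sig_x ffunE.
- have grow : #|S|.+1 <= #|S'|.+1 * 2 ^ j.+1.
    have : 0 < 2 ^ j by rewrite expn_gt0.
    move: fiber_size; rewrite (cardsD1 x0 S) x0S expnS /=; nia.
  have := leq_mul grow (leqnn (2 ^ 'C(j.+1, 2))).
  by rewrite [in X in _ -> X]binS bin1 expnD; lia.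
Qed.

Lemma exists_end_homogeneous j : 0 < n -> 2 ^ 'C(j, 2) <= n ->
  exists v S c, end_homogeneous j v S c.
Proof.
move=> n0; elim: j => [_|j IH hj].
  by exists (fun=> Ordinal n0), setT, (fun _ _ => false); apply: end_homogeneous0.
have [v [S [c hom]]] :=
  IH (leq_trans (leq_pexp2l (isT : 0 < 2) (leq_bin2l _ (leqnSn j))) hj).
have [_ _ _ _ sizeS] := hom; apply: end_homogeneousS hom _.
rewrite lt0n; apply: contraTneq hj => S0; move: sizeS; rewrite S0 mul1n; lia.
Qed.

End EndHomogeneous.

Section TraceGraph.
Variables (n m : nat) (H : {set {set 'I_n}}) (v : nat -> 'I_n) (c : nat -> nat -> bool).
Hypothesis v_inj : forall i k, i < k -> k < m.+1 -> v i != v k.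
Hypothesis v_hom : forall i i' k, i < i' -> i' < k -> k < m.+1 ->
  triple_edge H (v i) (v i') (v k) = c i i'.

Definition seq_pt (k : 'I_m.+1) : 'I_n := v k.

Lemma seq_pt_inj : injective seq_pt.
Proof.
move=> i k /eqP; apply: contraTeq; rewrite neq_ltn => /orP[ik|ki].
  exact: v_inj ik (ltn_ord k).
by rewrite eq_sym; apply: v_inj ki (ltn_ord i).
Qed.

Lemma seq_pt_edge (i j k : 'I_m.+1) : i < j -> j < k ->
  ([set seq_pt i; seq_pt j; seq_pt k] \in H) = c i j.
Proof. by move=> ij jk; rewrite -(v_hom ij jk (ltn_ord k)). Qed.

Definition trace_graph : {set {set 'I_m}} :=
  [set e : {set 'I_m} | if enum e is [:: i; i'] then c i i' else false].

Lemma uniform_trace_graph : uniform 2 trace_graph.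
Proof. by apply/forall_inP => e; rewrite inE cardE; case: (enum e) => [|? [|? []]]. Qed.

Lemma mem_trace_graph (i i' : 'I_m) : i < i' -> ([set i; i'] \in trace_graph) = c i i'.
Proof. by move=> ii'; rewrite inE enum_set2. Qed.

Definition with_top (Z : {set 'I_m}) : {set 'I_m.+1} := ord_max |: lift ord_max @: Z.

Lemma card_with_top Z : #|seq_pt @: with_top Z| = #|Z|.+1.
Proof.
rewrite card_imset; last exact: seq_pt_inj.
rewrite cardsU1 card_imset; last exact: lift_inj.
suff -> : ord_max \notin lift ord_max @: Z by [].
by apply/imsetP => -[z _ /eqP]; rewrite (negbTE (neq_lift _ _)).
Qed.

Lemma mem_with_top Z (x : 'I_m.+1) : x \in with_top Z -> x < m ->
  exists2 z, z \in Z & x = lift ord_max z.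
Proof.
by rewrite in_setU1 => /predU1P[-> /=|/imsetP[z zZ ->]]; [rewrite ltnn | exists z].
Qed.

Lemma lift_clique t : has_K 2 t trace_graph setT -> has_K 3 t.+1 H setT.
Proof.
case/existsP => Y /and3P[_ /eqP Yt Yclique].
apply/existsP; exists (seq_pt @: with_top Y); rewrite subsetT card_with_top Yt eqxx /=.
apply/forallP => e; apply/implyP => /andP[eX /eqP e3].
have [i [j [k [ij jk /and3P[iY jY kY] ->]]]] := imset_set3_sorted seq_pt_inj eX e3.
have lt_m x : x < k -> x < m by move=> xk; apply: leq_trans xk (ltn_ord k).
have [i' i'Y iE] := mem_with_top iY (lt_m _ (ltn_trans ij jk)).
have [j' j'Y jE] := mem_with_top jY (lt_m _ jk).
rewrite iE jE in ij jk *; rewrite seq_pt_edge // !lift_max.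
rewrite !lift_max in ij; rewrite -mem_trace_graph //.
apply: (implyP (forallP Yclique _)); rewrite subUset !sub1set i'Y j'Y.
by rewrite cards2 neq_ltn ij.
Qed.

Lemma lift_Kfree s Z : 0 < s ->
  has_K 3 s H (seq_pt @: with_top Z) -> has_K 2 s.-1 trace_graph Z.
Proof.
move=> s0 /existsP[X /and3P[XZ /eqP Xs Xclique]].
have [X' [X'Z XE X's]] := subset_imset_inj seq_pt_inj XZ.
have [x0 x0X'] : exists x0, x0 \in X' by apply/card_gt0P; rewrite X's Xs.
have [k kX' kmax] := arg_maxnP (@nat_of_ord _) x0X'.
have lt_k x : x \in X' :\ k -> x < k.
  by rewrite !inE => /andP[xk xX]; rewrite ltn_neqAle val_eqE xk /=; apply: kmax.
pose Y := [set i : 'I_m | lift ord_max i \in X' :\ k].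
have YE : lift ord_max @: Y = X' :\ k.
  apply/setP => x; apply/imsetP/idP => [[i] | xX]; first by rewrite inE => + ->.
  have /unlift_some[i xE _] : ord_max != x.
    by rewrite neq_ltn (leq_trans (lt_k x xX)) ?orbT // -ltnS ltn_ord.
  by exists i; rewrite // inE -xE.
have liftY i : i \in Y -> lift ord_max i < k by rewrite inE; apply: lt_k.
have liftX' i : i \in Y -> lift ord_max i \in X' by rewrite !inE => /andP[].
apply/existsP; exists Y; apply/and3P; split.
- apply/subsetP => i iY.
  have /mem_with_top : lift ord_max i \in with_top Z by apply: (subsetP X'Z); apply: liftX'.
  by case/(_ (leq_trans (liftY i iY) (ltn_ord k))) => z zZ /lift_inj ->.
- rewrite -(card_imset _ (@lift_inj _ ord_max)) YE.
  by have := cardsD1 k X'; rewrite X's Xs [k \in X']kX' => ->.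
apply/forallP => e; apply/implyP => /andP[eY /eqP/set2_sorted[a [b [ab eE]]]].
have [aY bY] : a \in Y /\ b \in Y by split; apply: (subsetP eY); rewrite eE !inE eqxx ?orbT.
have lab : lift ord_max a < lift ord_max b by rewrite !lift_max.
have lbk := liftY b bY.
rewrite eE mem_trace_graph // -(lift_max a) -(lift_max b) -(seq_pt_edge lab lbk).
apply: (implyP (forallP Xclique _)); apply/andP; split.
  rewrite XE; apply/subsetP => x; rewrite !inE => /orP[/orP[]|] /eqP->; apply: imset_f;
    by [apply: liftX' | ].
by rewrite card_set3 // (inj_eq seq_pt_inj) neq_ltn ?lab ?(ltn_trans lab lbk) ?lbk ?orbT.
Qed.

End TraceGraph.

Lemma f_le k s t n : f k s t n <= n.
Proof. by rewrite /f -minEnat -leEnat; apply: Order.TotalTheory.bigmin_le_id. Qed.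

Lemma f2_le_f3 s t n m : 2 < s -> s < t -> 2 ^ 'C(m.+1, 2) <= n ->
  f 2 s.-1 t.-1 m <= f 3 s t n.
Proof.
move=> s3 st hn; have n0 : 0 < n by apply: leq_trans hn; rewrite expn_gt0.
have mn : m <= n.
  apply: leq_trans (ltnW (ltn_expl m (ltnSn 1))) (leq_trans _ hn).
  by rewrite leq_exp2l // binS bin1 leq_addl.
rewrite [f 3 s t n]/f -minEnat -leEnat; apply/Order.TotalTheory.bigmin_geP; split.
  exact: leq_trans (f_le _ _ _ _) mn.
move=> E /andP[_ Efree].
have [v [S [c [v_inj _ v_hom _ _]]]] := exists_end_homogeneous E n0 hn.
apply: leq_trans (f_le_indep_num _ (uniform_trace_graph m c) _) _.
  apply: contra Efree => /(lift_clique v_inj v_hom).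
  by rewrite prednK // (leq_ltn_trans (leq0n s) st).
apply/bigmax_leqP => Z ZKfree.
have HKfree : ~~ has_K 3 s E (seq_pt v @: with_top Z).
  by apply: contra ZKfree; apply: lift_Kfree => //; apply: ltn_trans s3.
apply: leq_trans (leqnSn #|Z|) _; rewrite -(card_with_top v_inj) /indep_num.
exact: leq_bigmax_cond.
Qed.

Lemma binomial_le_exp n m : 'C(n, m) <= n ^ m.
Proof.
apply: (@leq_trans (n ^_ m)); first by rewrite -bin_ffact leq_pmulr ?fact_gt0.
rewrite ffact_prod -[m in n ^ m]card_ord -prod_nat_const.
by apply: leq_prod => i _; apply: leq_subr.
Qed.

Lemma bin2_le_sqr m : 'C(m.+1, 2) <= m * m.
Proof. by elim: m => // m IH; rewrite binS bin1; nia. Qed.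

From mathcomp Require Import all_classical all_reals all_analysis.
From mathcomp Require Import ring lra.
Import Order.TTheory GRing.Theory Num.Theory.
Local Open Scope ring_scope.

(** * Estimates in the reals *)

(* f <= s^2 K with K <= s^2 Q ln n + 1, Q = (s-1)^(s^2), and 1 <= 2 ln n. *)
Definition upper_const (s : nat) : nat := s * s * (s * s * s.-1 ^ (s * s)) + 2 * (s * s).

Section RealBounds.
Variable R : realType.

Lemma subr1_le_mul_expR (q : R) : 0 < q -> q - 1 <= q * expR (- q^-1).
Proof.
move=> q0; have := expR_ge1Dx (- q^-1).
by rewrite -(ler_pM2l q0) mulrDr mulr1 mulrN mulfV ?gt_eqF.
Qed.

Lemma expn_mul_predn_lt (n Q a K : nat) : (1 < n)%N -> (0 < Q)%N ->
  (a * Q)%:R * ln (n%:R : R) < K%:R ->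
  (n ^ (a * K) * Q.-1 ^ (K * K) < Q ^ (K * K))%N.
Proof.
move=> n1 Q0 lt_K; rewrite -(ltr_nat R) natrM !natrX -subn1 natrB //.
set x : R := n%:R; set q : R := Q%:R.
have x0 : 0 < x by rewrite ltr0n ltnW.
have q0 : 0 < q by rewrite ltr0n.
have q1 : 0 <= q - 1 by rewrite subr_ge0 ler1n.
have ln0 : 0 <= ln x by rewrite ln_ge0 // ler1n ltnW.
have K0 : 0 < K%:R :> R by apply: le_lt_trans lt_K; rewrite mulr_ge0.
have pow_le : (q - 1) ^+ (K * K) <= (q * expR (- q^-1)) ^+ (K * K).
  by rewrite lerXn2r ?nnegrE ?subr1_le_mul_expR // mulr_ge0 ?expR_ge0 ?ltW.
apply: (le_lt_trans (ler_wpM2l (exprn_ge0 _ (ltW x0)) pow_le)).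
have ex : x ^+ (a * K) = expR ((a * K)%:R * ln x) by rewrite expRM_natl lnK.
rewrite exprMn mulrCA ex -expRM_natl -expRD.
rewrite -[ltRHS]mulr1 ltr_pM2l ?exprn_gt0 // expR_lt1 !natrM.
rewrite (_ : _ + _ = K%:R / q * (a%:R * q * ln x - K%:R)); last by field; rewrite gt_eqF.
by rewrite pmulr_rlt0 ?divr_gt0 // subr_lt0 -natrM.
Qed.

Lemma ln_ge_half (x : R) : 2 <= x -> 1 <= 2 * ln x.
Proof.
move=> x2; have x0 : 0 < x by lra.
have := expR_ge1Dx (- ln x); rewrite expRN lnK ?posrE // => le_inv.
have : x^-1 <= 2^-1 by rewrite lef_pV2 ?posrE //; lra.
lra.
Qed.

Lemma pow2_bin_truncn_sqrt_ln n : (1 < n)%N ->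
  (2 ^ 'C((Num.truncn (Num.sqrt (ln (n%:R : R)))).+1, 2) <= n)%N.
Proof.
move=> n1; set m := Num.truncn _.
have x1 : 1 <= (n%:R : R) by rewrite ler1n ltnW.
have ln0 : 0 <= ln (n%:R : R) by rewrite ln_ge0.
have le_m : (m * m)%:R <= ln (n%:R : R).
  rewrite natrM -(sqr_sqrtr ln0) expr2.
  by apply: ler_pM; rewrite ?ler0n // truncn_le sqrtr_ge0.
apply: (@leq_trans (2 ^ (m * m))); first by rewrite leq_exp2l // bin2_le_sqr.
rewrite -(ler_nat R) natrX; apply: (@le_trans _ _ (expR 1 ^+ (m * m))).
  by rewrite lerXn2r ?nnegrE ?ler0n ?expR_ge0 //; have := expR_ge1Dx (1 : R); lra.
by rewrite -expRM_natl mulr1 -[X in _ <= X]lnK ?posrE ?ler_expR //; lra.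
Qed.

Lemma f3_le_ln s t n : (2 < s)%N -> (s < t)%N -> (1 < n)%N ->
  (f 3 s t n)%:R <= (upper_const s)%:R * ln (n%:R : R).
Proof.
move=> s2 st n1.
set Q := (s.-1 ^ (s * s))%N; set L := ln (n%:R : R).
have L_half : 1 <= 2 * L by apply: ln_ge_half; rewrite ler_nat.
set A : R := (s * s * Q)%:R * L.
set K := (Num.truncn A).+1.
have A_lt_K : A < K%:R by apply: truncnS_gt.
have K_le : K%:R <= A + 1 by rewrite -natr1 lerD2r truncn_le mulr_ge0 ?ler0n //; lra.
have f_le : (f 3 s t n <= s * s * K)%N.
  apply: f3_le_of_union_bound; rewrite ?(ltnW s2) //.
  apply: leq_ltn_trans (expn_mul_predn_lt (a := s * s) n1 _ A_lt_K); last first.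
    by rewrite /Q expn_gt0 -subn1 subn_gt0 (ltn_trans _ s2).
  by rewrite leq_mul2r binomial_le_exp orbT.
apply: (@le_trans _ _ ((s * s)%:R * (A + 1))).
  by rewrite -(ler_nat R) natrM in f_le; apply: le_trans f_le _; rewrite ler_wpM2l.
rewrite /A /upper_const natrD !natrM -/L -/Q.
have : (s * s)%:R * 1 <= (s * s)%:R * (2 * L) :> R by rewrite ler_wpM2l.
rewrite natrM; nra.
Qed.

End RealBounds.

Theorem theorem1 (R : realType) (s : nat) : (3 <= s)%N ->
  exists C : R, 0 < C /\
    forall (t n : nat), (s < t)%N -> (2 <= n)%N ->
      (f 2 s.-1 t.-1 (Num.truncn (Num.sqrt (ln (n%:R : R)))) <= f 3 s t n)%N /\
      (f 3 s t n)%:R <= C * ln (n%:R : R).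
Proof.
move=> s3; exists (upper_const s)%:R; split; first by rewrite ltr0n /upper_const; nia.
move=> t n st n2; split; first exact: f2_le_f3 s3 st (pow2_bin_truncn_sqrt_ln R n2).
exact: f3_le_ln s3 st n2.
Qed.
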